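(* Let $\Omega\subset\mathbb{R}^n$ be a bounded, strictly convex domain, $\Lambda\ge1$, $K<\infty$, and let $v\in C(\overline\Omega)$ satisfy $M_\Lambda^-(D^2v)\le K$ in $\Omega$ in the viscosity sense. Suppose a paraboloid $P$ of opening $-a<0$ is tangent from below to $\Gamma^0_v$ in $\Omega$ at a point $x_0\in\Omega\setminus A_0(v)$, and suppose that for some $t>0$ the paraboloid $P+t$ is tangent from below to $v$ in $\Omega$ at a point $x_1\in\overline\Omega$ (i.e. $P+t\le v$ on $\overline\Omega$ and $P(x_1)+t=v(x_1)$). Then $x_1\in\overline\Omega\setminus A_0(v)$.
   Context: For a symmetric $n\times n$ matrix $N$, $M_\Lambda^-(N) := (\text{sum of positive eigenvalues of }N) + \Lambda\,(\text{sum of negative eigenvalues of }N)$. For $u,\varphi\in C(\overline\Omega)$, $\varphi$ is tangent from below to $u$ in $\Omega$ at $x_0$ if $\varphi\le u$ in $\overline\Omega$ and $\varphi(x_0)=u(x_0)$. $M_\Lambda^-(D^2v)\le K$ in the viscosity sense in $\Omega$ means $M_\Lambda^-(D^2\varphi(x_0))\le K$ whenever $\varphi\in C^2(\overline\Omega)$ is tangent from below to $v$ in $\Omega$ at $x_0\in\Omega$. A paraboloid of opening $a$ is a function $P^a_{y,b}(x)=\frac a2|x|^2+y\cdot x+b$ with $y\in\mathbb{R}^n$, $b\in\mathbb{R}$. For $a\ge 0$, the $a$-convex envelope of $v$ is $\Gamma^a_v(x):=\sup\{P^{-a}_{y,b}(x): y\in\mathbb{R}^n,\ b\in\mathbb{R},\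 P^{-a}_{y,b}\le v\text{ in }\overline\Omega\}$ for $x\in\overline\Omega$ (so $\Gamma^0_v$ is the convex envelope), and $A_a(v):=\{x\in\Omega: v(x)=\Gamma^a_v(x)\}$. *)

(* R^n is modelled as 'rV[R]_n. *)
From HB Require Import structures.
From mathcomp Require Import all_boot all_order all_algebra.
From mathcomp Require Import all_classical all_reals all_analysis.
Set Implicit Arguments. Unset Strict Implicit. Unset Printing Implicit Defensive.
Import Order.TTheory GRing.Theory Num.Theory.
Import numFieldNormedType.Exports.
Local Open Scope classical_set_scope.
Local Open Scope ring_scope.

Definition evec {R : realType} {n : nat} (i : 'I_n) : 'rV[R]_n := delta_mx 0 i.

Definition dotv {R : realType} {n : nat} (y x : 'rV[R]_n) : R :=
  \sum_(i < n) y 0 i * x 0 i.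
Definition sqnorm {R : realType} {n : nat} (x : 'rV[R]_n) : R :=
  \sum_(i < n) x 0 i ^+ 2.

Definition parab {R : realType} {n : nat} (a : R) (y : 'rV[R]_n) (b : R)
  (x : 'rV[R]_n) : R := a / 2 * sqnorm x + dotv y x + b.

Definition pderiv {R : realType} {n : nat} (f : 'rV[R]_n -> R) (i : 'I_n) :
  'rV[R]_n -> R := fun x => 'D_(evec i) f x.

Definition hessian {R : realType} {n : nat} (f : 'rV[R]_n -> R) (x : 'rV[R]_n)
  : 'M[R]_n := \matrix_(i < n, j < n) pderiv (pderiv f j) i x.

Definition cont_ext_closure {R : realType} {n : nat} (Om : set 'rV[R]_n)
  (g : 'rV[R]_n -> R) : Prop :=
  exists h : 'rV[R]_n -> R,
    {within closure Om, continuous h} /\ (forall x, Om x -> h x = g x).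

Definition C2_closure {R : realType} {n : nat} (Om : set 'rV[R]_n)
  (phi : 'rV[R]_n -> R) : Prop :=
  [/\ {within closure Om, continuous phi},
      (forall i x, Om x -> derivable phi x (evec i)),
      (forall i j x, Om x -> derivable (pderiv phi j) x (evec i)),
      (forall i, {within Om, continuous (pderiv phi i)} /\
                 cont_ext_closure Om (pderiv phi i)) &
      (forall i j, {within Om, continuous (pderiv (pderiv phi j) i)} /\
                   cont_ext_closure Om (pderiv (pderiv phi j) i))].

Definition bounded_set {R : realType} {n : nat} (Om : set 'rV[R]_n) : Prop :=
  exists M : R, forall x, Om x -> sqnorm x <= M.
Definition strictly_convex {R : realType} {n : nat} (Om : set 'rV[R]_n) : Prop :=
  forall x y (t : R), closure Om x -> closure Om y -> x != y ->
    0 < t < 1 -> Om ((1 - t) *: x + t *: y).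
Definition bounded_strictly_convex_domain {R : realType} {n : nat}
  (Om : set 'rV[R]_n) : Prop :=
  [/\ Om !=set0, open Om, connected Om, bounded_set Om & strictly_convex Om].

(* M^-_Lambda evaluated on a list s of eigenvalues (with multiplicity) *)
Definition MLminus_seq {R : realType} (L : R) (s : seq R) : R :=
  \sum_(e <- s | 0 < e) e + L * \sum_(e <- s | e < 0) e.

(* M^-_Lambda(N) <= K: for the eigenvalues of N (roots of the characteristic
   polynomial, listed with multiplicity), the quantity is <= K *)
Definition MLminus_le {R : realType} {n : nat} (L : R) (N : 'M[R]_n) (K : R)
  : Prop :=
  forall s : seq R, char_poly N = \prod_(e <- s) ('X - e%:P) ->
    MLminus_seq L s <= K.

Definition tangent_below {R : realType} {n : nat} (Om : set 'rV[R]_n)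
  (phi u : 'rV[R]_n -> R) (x0 : 'rV[R]_n) : Prop :=
  (forall x, closure Om x -> phi x <= u x) /\ phi x0 = u x0.

Definition visc_MLminus_le {R : realType} {n : nat} (Om : set 'rV[R]_n)
  (L K : R) (v : 'rV[R]_n -> R) : Prop :=
  forall (phi : 'rV[R]_n -> R) (x0 : 'rV[R]_n),
    C2_closure Om phi -> Om x0 -> tangent_below Om phi v x0 ->
    MLminus_le L (hessian phi x0) K.

Definition Gamma_env {R : realType} {n : nat} (Om : set 'rV[R]_n) (a : R)
  (v : 'rV[R]_n -> R) (x : 'rV[R]_n) : R :=
  sup [set r : R | exists (y : 'rV[R]_n) (b : R),
         (forall z, closure Om z -> parab (- a) y b z <= v z) /\
         r = parab (- a) y b x].

Definition contact_set {R : realType} {n : nat} (Om : set 'rV[R]_n) (a : R)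
  (v : 'rV[R]_n -> R) : set 'rV[R]_n :=
  [set x | Om x /\ v x = Gamma_env Om a v x].

(* Suppose x1 were a contact point.  Where v touches its convex envelope at an
   interior point, the slopes of affine functions that stay below v and come
   within d of v(x1) form nonempty closed sets, decreasing in d and bounded
   because Om is open; by compactness some affine function
   v(x1) + y1.(x - x1) stays below v.  The paraboloid P + t also touches v at x1,
   with slope g = y - a x1.  If y1 = g, that affine function lies below Gamma_v
   but strictly above P, against P(x0) = Gamma_v(x0).  Otherwise, with
   h = x - x1 and w = (y1 - g)/2 <> 0, v lies above the concave kink
   v(x1) + m.h + |w.h| - a|h|^2/2, hence above the smooth functions
   v(x1) + m.h + c(w.h)^2 - c^3(w.h)^4 - a|h|^2/2, which touch v at x1 and have
   Hessian 2c w^T w - a I with M^-_Lambda = 2c|w|^2 - a - Lambda (n-1) a > K for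
   c large, against the viscosity inequality. *)

From HB Require Import structures.
From mathcomp Require Import all_boot all_order all_algebra.
From mathcomp Require Import all_classical all_reals all_analysis.
From mathcomp Require Import ring lra.
Set Implicit Arguments. Unset Strict Implicit. Unset Printing Implicit Defensive.
Import Order.TTheory GRing.Theory Num.Theory.
Import numFieldNormedType.Exports.
Local Open Scope classical_set_scope.
Local Open Scope ring_scope.

Section InnerProduct.
Variables (R : realType) (n : nat).
Implicit Types (x y u w : 'rV[R]_n) (r : R).

Lemma dotvC y x : dotv y x = dotv x y.
Proof. by apply: eq_bigr => i _; rewrite mulrC. Qed.

Lemma dotvDr y u w : dotv y (u + w) = dotv y u + dotv y w.
Proof. by rewrite /dotv -big_split; apply: eq_bigr => i _; rewrite mxE mulrDr. Qed.

Lemma dotvZr y r u : dotv y (r *: u) = r * dotv y u.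
Proof. by rewrite /dotv mulr_sumr; apply: eq_bigr => i _; rewrite mxE mulrCA. Qed.

Lemma dotvNr y u : dotv y (- u) = - dotv y u.
Proof. by rewrite -scaleN1r dotvZr mulN1r. Qed.

Lemma dotvBr y u w : dotv y (u - w) = dotv y u - dotv y w.
Proof. by rewrite dotvDr dotvNr. Qed.

Lemma dotv0r y : dotv y 0 = 0.
Proof. by rewrite -(scale0r 0) dotvZr mul0r. Qed.

Lemma dotvDl y u w : dotv (u + w) y = dotv u y + dotv w y.
Proof. by rewrite dotvC dotvDr !(dotvC y). Qed.

Lemma dotvZl y r u : dotv (r *: u) y = r * dotv u y.
Proof. by rewrite dotvC dotvZr dotvC. Qed.

Lemma dotvBl y u w : dotv (u - w) y = dotv u y - dotv w y.
Proof. by rewrite dotvC dotvBr !(dotvC y). Qed.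

Lemma dotv_evec y (j : 'I_n) : dotv y (evec j) = y 0 j.
Proof.
rewrite /dotv (bigD1 j) //= big1 => [|i ij]; first by rewrite mxE !eqxx mulr1 addr0.
by rewrite mxE (negbTE ij) andbF mulr0.
Qed.

Lemma sqnormE x : sqnorm x = dotv x x.
Proof. by apply: eq_bigr => i _; rewrite expr2. Qed.

Lemma sqnorm_ge0 x : 0 <= sqnorm x.
Proof. by apply: sumr_ge0 => i _; exact: sqr_ge0. Qed.

Lemma sqnorm_eq0 x : (sqnorm x == 0) = (x == 0).
Proof.
apply/idP/eqP => [|->]; last by rewrite sqnormE dotv0r.
rewrite psumr_eq0 => [/allP x0|i _]; last exact: sqr_ge0.
apply/rowP => i; rewrite mxE; apply/eqP; rewrite -sqrf_eq0.
exact: (implyP (x0 i (mem_index_enum i))).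
Qed.

Lemma sqnormDr x r u :
  sqnorm (r *: u + x) = sqnorm x + 2 * r * dotv x u + r ^+ 2 * sqnorm u.
Proof. by rewrite !sqnormE dotvDl !dotvDr !dotvZl !dotvZr (dotvC u x); ring. Qed.

Lemma dotv_ge_sqnorm x y : - (sqnorm x + sqnorm y) / 2 <= dotv x y.
Proof. by have := sqnorm_ge0 (x + y); rewrite !sqnormE dotvDl !dotvDr (dotvC y x); lra. Qed.

End InnerProduct.

Section PointwiseContinuity.
Variables (R : realType) (T : topologicalType).
Implicit Types f g : T -> R.

Lemma continuous_cstf (k : R) : continuous (fun _ : T => k).
Proof. exact: cst_continuous. Qed.

Lemma continuous_addf f g : continuous f -> continuous g -> continuous (fun z => f z + g z).
Proof. by move=> fc gc x; exact: (continuousD (fc x) (gc x)). Qed.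

Lemma continuous_subf f g : continuous f -> continuous g -> continuous (fun z => f z - g z).
Proof. by move=> fc gc x; exact: (continuousB (fc x) (gc x)). Qed.

Lemma continuous_mulf f g : continuous f -> continuous g -> continuous (fun z => f z * g z).
Proof. by move=> fc gc x; exact: (continuousM (fc x) (gc x)). Qed.

Lemma continuous_expf f k : continuous f -> continuous (fun z => f z ^+ k).
Proof.
move=> fc; elim: k => [|k IH]; first exact: continuous_cstf.
by under eq_fun do rewrite exprS; exact: continuous_mulf.
Qed.

End PointwiseContinuity.

Lemma continuous_dotv (R : realType) n (u : 'rV[R]_n) : continuous (dotv u).
Proof.
rewrite /dotv -fct_sumE; apply: (big_ind (fun g : 'rV[R]_n -> R => continuous g)) => [||i _].
- exact: continuous_cstf.
- by move=> f g; exact: continuous_addf.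
- by apply: continuous_mulf; [exact: continuous_cstf | exact: coord_continuous].
Qed.

Lemma continuous_sqnorm (R : realType) n : continuous (@sqnorm R n).
Proof.
rewrite /sqnorm -fct_sumE; apply: (big_ind (fun g : 'rV[R]_n -> R => continuous g)) => [||i _].
- exact: continuous_cstf.
- by move=> f g; exact: continuous_addf.
- exact/continuous_expf/coord_continuous.
Qed.

Section ShiftedCoordinates.
Variables (R : realType) (n : nat) (x1 : 'rV[R]_n).

Lemma continuous_shift : continuous (fun z : 'rV[R]_n => z - x1).
Proof. by move=> z; exact: (continuousB (@cvg_id _ _) (cvg_cst _)). Qed.

Lemma continuous_coord_shift (j : 'I_n) : continuous (fun z : 'rV[R]_n => (z - x1) 0 j).
Proof.
by move=> z; exact: (continuous_comp (@continuous_shift z) (@coord_continuous _ 1 n 0 j (z - x1))).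
Qed.

Lemma continuous_dotv_shift (u : 'rV[R]_n) : continuous (fun z : 'rV[R]_n => dotv u (z - x1)).
Proof.
by move=> z; exact: (continuous_comp (@continuous_shift z) (@continuous_dotv _ _ u (z - x1))).
Qed.

Lemma continuous_sqnorm_shift : continuous (fun z : 'rV[R]_n => sqnorm (z - x1)).
Proof.
by move=> z; exact: (continuous_comp (@continuous_shift z) (@continuous_sqnorm _ n (z - x1))).
Qed.

End ShiftedCoordinates.

Ltac continuity_tac :=
  repeat first [ exact: continuous_cstf | exact: continuous_dotv_shift
               | exact: continuous_sqnorm_shift | exact: continuous_coord_shift
               | apply: continuous_subf | apply: continuous_addf
               | apply: continuous_mulf | apply: continuous_expf ].

Lemma derive_expansion (R : realType) (V : normedModType R) (f : V -> R) (z e : V)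
    (p : R) (q : {poly R}) :
  (forall r, f (r *: e + z) = f z + r * p + r ^+ 2 * q.[r]) ->
  derivable f z e /\ 'D_e f z = p.
Proof.
move=> fE; set k := q * 'X + p%:P.
have kp : k.[r] @[r --> 0^'] --> p.
  have {1}-> : p = k.[0] by rewrite /k hornerMXaddC mulr0 add0r.
  exact/continuous_withinNx/continuous_horner.
have quotE : {near 0^', horner k =1 (fun h => h^-1 *: ((f \o shift z) (h *: e) - f z))}.
  near=> h; have h0 : h != 0 by near: h; exact: nbhs_dnbhs_neq.
  by rewrite /= /shift fE /k hornerMXaddC -[_ *: _]/(_ * _); field.
have quot_p : (fun h => h^-1 *: ((f \o shift z) (h *: e) - f z)) @ 0^' --> p.
  exact: cvg_trans (near_eq_cvg quotE) kp.
by split; [apply/cvg_ex; exists p | exact: cvg_lim quot_p].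
Unshelve. all: by end_near.
Qed.
Lemma quartic_le_norm (R : realType) (c s : R) : 0 <= c -> c * s ^+ 2 - c ^+ 3 * s ^+ 4 <= `|s|.
Proof.
move=> c0; set u := c * `|s|.
have u0 : 0 <= u by rewrite mulr_ge0.
have s2 : s ^+ 2 = `|s| ^+ 2 by rewrite real_normK ?num_real.
have -> : c * s ^+ 2 - c ^+ 3 * s ^+ 4 = `|s| * (u - u ^+ 3).
  by rewrite (_ : 4 = 2 * 2)%N // exprM s2 /u; ring.
rewrite -[leRHS]mulr1 ler_wpM2l //.
have u3 : 0 <= u ^+ 3 by rewrite exprn_ge0.
case: (lerP u 1) => u1; first lra.
have : u <= u ^+ 3 by rewrite -[leLHS]mul1r exprSr ler_wpM2r // expr2 mulr_ege1 // ltW.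
lra.
Qed.

Section KinkTest.
Variables (R : realType) (n : nat) (x1 m w : 'rV[R]_n) (V1 c a : R).

Definition wproj z := dotv w (z - x1).

Definition kink_test z := V1 + dotv m (z - x1) + c * wproj z ^+ 2 - c ^+ 3 * wproj z ^+ 4
  - a / 2 * sqnorm (z - x1).

Definition kink_test_d1 (j : 'I_n) z := m 0 j + 2 * c * wproj z * w 0 j
  - 4 * c ^+ 3 * wproj z ^+ 3 * w 0 j - a * (z - x1) 0 j.

Definition kink_test_d2 (i j : 'I_n) z := 2 * c * w 0 i * w 0 j
  - 12 * c ^+ 3 * wproj z ^+ 2 * w 0 i * w 0 j - a * (j == i)%:R.

Lemma wproj_shift r e z : wproj (r *: e + z) = wproj z + r * dotv w e.
Proof. by rewrite /wproj -addrA dotvDr dotvZr [LHS]addrC. Qed.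

Lemma derive_kink_test z e : derivable kink_test z e /\
  'D_e kink_test z = dotv m e + 2 * c * wproj z * dotv w e
     - 4 * c ^+ 3 * wproj z ^+ 3 * dotv w e - a * dotv (z - x1) e.
Proof.
set s := wproj z; set d := dotv w e.
apply: (derive_expansion (q := ((- c ^+ 3 * d ^+ 4)%:P * 'X + (- 4 * c ^+ 3 * s * d ^+ 3)%:P) * 'X
  + (c * d ^+ 2 - 6 * c ^+ 3 * s ^+ 2 * d ^+ 2 - a / 2 * sqnorm e)%:P)) => r.
rewrite /kink_test !wproj_shift -/s -/d -[r *: e + z - x1]addrA sqnormDr dotvDr dotvZr.
rewrite !hornerMXaddC hornerC.
by field.
Qed.

Lemma pderiv_kink_test j : pderiv kink_test j = kink_test_d1 j.
Proof.
by apply/funext => z; rewrite /pderiv (derive_kink_test z (evec j)).2 /kink_test_d1 !dotv_evec.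
Qed.

Lemma derive_kink_test_d1 i j z : derivable (kink_test_d1 j) z (evec i) /\
  'D_(evec i) (kink_test_d1 j) z = kink_test_d2 i j z.
Proof.
set s := wproj z.
apply: (derive_expansion (q := (- 4 * c ^+ 3 * w 0 i ^+ 3 * w 0 j)%:P * 'X
  + (- 12 * c ^+ 3 * s * w 0 i ^+ 2 * w 0 j)%:P)) => r.
rewrite /kink_test_d1 /kink_test_d2 wproj_shift dotv_evec -/s hornerMXaddC hornerC.
have -> : (r *: evec i + z - x1) 0 j = r * (j == i)%:R + (z - x1) 0 j.
  by rewrite !mxE eqxx addrA.
ring.
Qed.

Lemma pderiv_kink_test_d1 i j : pderiv (kink_test_d1 j) i = kink_test_d2 i j.
Proof. by apply/funext => z; rewrite /pderiv (derive_kink_test_d1 i j z).2. Qed.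


Lemma continuous_kink_test : continuous kink_test.
Proof. rewrite /kink_test /wproj; continuity_tac. Qed.

Lemma continuous_kink_test_d1 j : continuous (kink_test_d1 j).
Proof. rewrite /kink_test_d1 /wproj; continuity_tac. Qed.

Lemma continuous_kink_test_d2 i j : continuous (kink_test_d2 i j).
Proof. rewrite /kink_test_d2 /wproj; continuity_tac. Qed.

Lemma C2_closure_kink_test (Om : set 'rV[R]_n) : C2_closure Om kink_test.
Proof.
have cont_closure (f : 'rV[R]_n -> R) : continuous f -> {within closure Om, continuous f}.
  exact: continuous_subspaceT.
have cont_Om (f : 'rV[R]_n -> R) :
    continuous f -> {within Om, continuous f} /\ cont_ext_closure Om f.
  by move=> fc; split; [exact: continuous_subspaceT | exists f; split => //; exact: cont_closure].
split => [|i z _|i j z _|i|i j].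
- exact/cont_closure/continuous_kink_test.
- exact: (derive_kink_test z (evec i)).1.
- by rewrite pderiv_kink_test; exact: (derive_kink_test_d1 i j z).1.
- by rewrite pderiv_kink_test; exact/cont_Om/continuous_kink_test_d1.
- by rewrite pderiv_kink_test pderiv_kink_test_d1; exact/cont_Om/continuous_kink_test_d2.
Qed.

Lemma kink_test_center : kink_test x1 = V1.
Proof. by rewrite /kink_test /wproj subrr dotv0r sqnormE !dotv0r; ring. Qed.

Lemma hessian_kink_test : hessian kink_test x1 = (2 * c) *: (w^T *m w) - a%:M.
Proof.
apply/matrixP => i j; rewrite !mxE big_ord1 !mxE pderiv_kink_test pderiv_kink_test_d1.
rewrite /kink_test_d2 /wproj subrr dotv0r eq_sym.
by case: (i == j); ring.
Qed.

Lemma kink_test_le (z : 'rV[R]_n) : 0 <= c ->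
  kink_test z <= V1 + dotv m (z - x1) + `|wproj z| - a / 2 * sqnorm (z - x1).
Proof. by move=> c0; have := quartic_le_norm (wproj z) c0; rewrite /kink_test; lra. Qed.

End KinkTest.

Lemma det_scalar_sub_rank1 (A : comRingType) m (C : A) (u : 'cV[A]_m) (v : 'rV[A]_m) :
  \det (C%:M - u *m v) * C = C ^+ m * (C - (v *m u) 0 0).
Proof.
set M := block_mx (1%:M : 'M[A]_1) v u C%:M.
have M_lower_upper : M = block_mx 1%:M 0 u 1%:M *m block_mx 1%:M v 0 (C%:M - u *m v).
  by rewrite mulmx_block !mul1mx !mul0mx !mulmx1 !addr0 addrC subrK.
have M_upper : M *m block_mx (C%:M : 'M[A]_1) 0 (- u) 1%:M =
               block_mx (C%:M - v *m u) v 0 C%:M.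
  rewrite mulmx_block !mul1mx !mulmx0 !mulmx1 ?add0r ?addr0.
  by rewrite !mulmxN mul_mx_scalar mul_scalar_mx subrr addrC.
have := congr1 determinant M_upper.
rewrite detM M_lower_upper detM !(@det_lblock _ 1 m) !(@det_ublock _ 1 m) !det1 !mul1r.
by rewrite !det_scalar !det_mx11 !mxE eqxx mulr1n expr1 mulr1 => ->; rewrite mulrC.
Qed.

Lemma char_poly_rank1 (R : realType) n (w : 'rV[R]_n.+1) (c a : R) :
  char_poly (c *: (w^T *m w) - a%:M) = ('X - (c * sqnorm w - a)%:P) * ('X + a%:P) ^+ n.
Proof.
set C : {poly R} := 'X + a%:P.
set u : 'cV[{poly R}]_n.+1 := map_mx polyC (c *: w^T).
set v : 'rV[{poly R}]_n.+1 := map_mx polyC w.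
have charE : char_poly_mx (c *: (w^T *m w) - a%:M) = C%:M - u *m v.
  apply/matrixP => i j; rewrite !mxE !big_ord1 !mxE.
  by case: (eqVneq i j) => [->|ij]; rewrite ?eqxx ?(negbTE ij) /= ?mulr1n ?mulr0n
     ?rmorphB ?rmorphM ?rmorph0 /C; ring.
have vu : (v *m u) 0 0 = (c * sqnorm w)%:P.
  rewrite !mxE /sqnorm mulr_sumr rmorph_sum; apply: eq_bigr => i _.
  by rewrite !mxE -polyCM; congr (_%:P); ring.
have C0 : C != 0 by rewrite monic_neq0 // monicXaddC.
apply: (mulIf C0).
by rewrite /char_poly charE det_scalar_sub_rank1 vu exprS polyCB /C; ring.
Qed.

Lemma MLminus_seq_cons_nseq (R : realType) (L mu a : R) k : 0 < mu -> 0 < a ->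
  MLminus_seq L (mu :: nseq k (- a)) = mu - L * (k%:R * a).
Proof.
move=> mu0 a0; rewrite /MLminus_seq !big_cons mu0 ltNge (ltW mu0) /=.
rewrite !big_nseq_cond oppr_gt0 oppr_lt0 a0 ltNge (ltW a0) /= iter_addr_0.
by rewrite mulNrn -mulr_natl; ring.
Qed.

Lemma visc_no_kink_below (R : realType) n (Om : set 'rV[R]_n) (L K a : R)
    (v : 'rV[R]_n -> R) (x1 m w : 'rV[R]_n) :
  visc_MLminus_le Om L K v -> 0 <= L -> 0 < a -> Om x1 -> w != 0 ->
  ~ (forall z, closure Om z ->
       v x1 + dotv m (z - x1) + `|dotv w (z - x1)| - a / 2 * sqnorm (z - x1) <= v z).
Proof.
case: n => [|k] in Om v x1 m w *.
  by move=> _ _ _ _ /eqP[]; apply/rowP => -[].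
move=> visc L0 a0 Ox1 w0 kink_le.
have w2_gt0 : 0 < sqnorm w by rewrite lt0r sqnorm_ge0 sqnorm_eq0 w0.
set c := (`|K| + L * k%:R * a + a + 1) / (2 * sqnorm w).
have c0 : 0 <= c by rewrite divr_ge0 ?mulr_ge0 ?(ltW w2_gt0) // !addr_ge0 // ?mulr_ge0 // ltW.
have c2 : 2 * c * sqnorm w = `|K| + L * k%:R * a + a + 1 by rewrite /c; field; rewrite lt0r_neq0.
have Lka : 0 <= L * k%:R * a by rewrite !mulr_ge0 // ltW.
have tangent : tangent_below Om (kink_test x1 m w (v x1) c a) v x1.
  by split; [move=> z zOm; exact: le_trans (kink_test_le x1 m w (v x1) a z c0) (kink_le z zOm)
            | exact: kink_test_center].
have := visc _ _ (C2_closure_kink_test x1 m w (v x1) c a Om) Ox1 tangent.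
rewrite hessian_kink_test => /(_ ((2 * c * sqnorm w - a) :: nseq k (- a))).
rewrite char_poly_rank1 big_cons big_nseq iter_mulr_1 rmorphN opprK => /(_ erefl).
rewrite MLminus_seq_cons_nseq // c2; last by have := normr_ge0 K; lra.
by have := ler_norm K; lra.
Qed.

Lemma kink_le_max (R : realType) n (y1 g h : 'rV[R]_n) (A S V : R) : 0 <= S ->
  A + dotv y1 h <= V -> A + dotv g h - S <= V ->
  A + dotv (2^-1 *: (y1 + g)) h + `|dotv (2^-1 *: (y1 - g)) h| - S <= V.
Proof.
rewrite !dotvZl dotvDl dotvBl => S0 le1 le2.
by case: (lerP 0 (2^-1 * (dotv y1 h - dotv g h))) => [/ger0_norm|/ltr0_norm] ->; lra.
Qed.

Lemma closure_sqnorm_le (R : realType) n (Om : set 'rV[R]_n) M :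
  (forall x, Om x -> sqnorm x <= M) -> forall z, closure Om z -> sqnorm z <= M.
Proof.
move=> Om_le z Om_z; pose H := @sqnorm R n @^-1` [set r : R | r <= M].
have H_closed : closed H.
  by apply: preimage_closed => [u _|]; [exact: continuous_sqnorm | exact: closed_le].
by have := closureS (Om_le : Om `<=` H) Om_z; rewrite -(closure_id H).1.
Qed.

Lemma parab_opp0 (R : realType) n (y : 'rV[R]_n) b x : parab (- 0) y b x = dotv y x + b.
Proof. by rewrite /parab oppr0 !mul0r add0r. Qed.

Lemma parab_recenter (R : realType) n a (y : 'rV[R]_n) b x1 z :
  parab (- a) y b z = parab (- a) y b x1 + dotv (y - a *: x1) (z - x1) - a / 2 * sqnorm (z - x1).
Proof.
rewrite /parab !sqnormE !(dotvBl, dotvBr, dotvZl, dotvZr) (dotvC z x1).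
by field.
Qed.

Lemma parab_bounded_below (R : realType) n (Om : set 'rV[R]_n) M a y b :
  (forall x, Om x -> sqnorm x <= M) -> 0 <= a ->
  exists b0, forall z, closure Om z -> b0 <= parab (- a) y b z.
Proof.
move=> Om_le a0; exists (- (a / 2 * M) - (sqnorm y + M) / 2 + b) => z Om_z.
have z_le := closure_sqnorm_le Om_le Om_z.
have : a / 2 * sqnorm z <= a / 2 * M by rewrite ler_wpM2l // divr_ge0.
by have := dotv_ge_sqnorm y z; rewrite /parab mulNr; lra.
Qed.


Lemma evec_norm_le1 (R : realType) n (i : 'I_n) : `|evec i : 'rV[R]_n| <= 1.
Proof.
rewrite [leLHS]/Num.norm /= mx_normrE; apply: bigmax_le => // -[? ?] _ /=.
by rewrite mxE; case: (_ && _); rewrite ?normr1 ?normr0.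
Qed.

Lemma open_evec_segment (R : realType) n (Om : set 'rV[R]_n) x : open Om -> Om x ->
  exists2 rho : R, 0 < rho & forall i r, `|r| <= rho -> Om (x + r *: evec i).
Proof.
rewrite openE => /(_ x) Om_nbhs /Om_nbhs /nbhs_ballP[e e0 ball_Om].
exists (e / 2) => [|i r r_le]; first by rewrite divr_gt0.
apply: ball_Om; rewrite -ball_normE /ball_ /= opprD addrA subrr add0r normrN normrZ.
rewrite (le_lt_trans (ler_pM (normr_ge0 _) (normr_ge0 _) r_le (evec_norm_le1 _ _))) //.
by rewrite mulr1 ltr_pdivrMr // ltr_pMr // ltr1n.
Qed.

Section ContactSupport.
Variables (R : realType) (n : nat) (Om : set 'rV[R]_n) (v : 'rV[R]_n -> R) (x1 : 'rV[R]_n).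

Lemma Gamma_env0_ge_affine (y : 'rV[R]_n) b x : closure Om x ->
  (forall z, closure Om z -> dotv y z + b <= v z) -> dotv y x + b <= Gamma_env Om 0 v x.
Proof.
move=> Om_x affine_le; rewrite -parab_opp0; apply: ub_le_sup.
  by exists (v x) => _ [y' [b' [le_v ->]]]; exact: le_v.
by exists y, b; split => // z /affine_le; rewrite parab_opp0.
Qed.

Definition near_support (d : R) := [set u : 'rV[R]_n |
  forall z, closure Om z -> v x1 - d + dotv u (z - x1) <= v z].

Lemma near_supportS d d' : d <= d' -> near_support d `<=` near_support d'.
Proof. by move=> le_dd' u u_supp z Om_z; apply: le_trans (u_supp z Om_z); lra. Qed.

Lemma closed_near_support d : closed (near_support d).
Proof.
have -> : near_support d = \bigcap_(z in closure Om)
    ((fun u => dotv u (z - x1)) @^-1` [set r | r <= v z - v x1 + d]).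
  by apply/seteqP; split => u u_supp z /u_supp /=; lra.
apply: closed_bigI => z _; apply: preimage_closed => [u _|]; last exact: closed_le.
by under eq_fun do rewrite dotvC; exact: continuous_dotv.
Qed.

Lemma near_support_contact (b0 : R) : (forall z, closure Om z -> b0 <= v z) -> closure Om x1 ->
  v x1 = Gamma_env Om 0 v x1 -> forall d, 0 < d -> near_support d !=set0.
Proof.
move=> v_ge Om_x1 contact d d0.
have Gamma_sup : has_sup [set r | exists y b,
    (forall z, closure Om z -> parab (- 0) y b z <= v z) /\ r = parab (- 0) y b x1].
  split; last by exists (v x1) => _ [y [b [le_v ->]]]; exact: le_v.
  by exists b0, 0, b0; split => [z /v_ge|]; rewrite parab_opp0 dotvC dotv0r add0r.
have [_ [y [b [le_v ->]]] lt_sup] := sup_adherent d0 Gamma_sup.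
exists y => z Om_z; move: (le_v z Om_z) lt_sup; rewrite -/(Gamma_env Om 0 v x1) -contact.
by rewrite !parab_opp0 dotvBr; lra.
Qed.

Lemma near_support_bounded : open Om -> Om x1 ->
  exists M : 'I_n -> R, forall u, near_support 1 u -> forall i, `|u 0 i| <= M i.
Proof.
move=> Om_open Om_x1; have [rho rho0 Om_segment] := open_evec_segment Om_open Om_x1.
pose B r i := v (x1 + r *: evec i) - v x1 + 1.
exists (fun i => (`|B rho i| + `|B (- rho) i|) / rho) => u u_supp i.
have step r : `|r| <= rho -> r * u 0 i <= B r i.
  move=> r_le; have := u_supp _ (subset_closure (Om_segment i r r_le)).
  have -> : x1 + r *: evec i - x1 = r *: evec i by rewrite addrC addKr.
  by rewrite dotvZr dotv_evec /B; lra.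
move: (step rho) (step (- rho)); rewrite normrN gtr0_norm // mulNr.
move=> /(_ (lexx _)) le_p /(_ (lexx _)) le_m; rewrite ler_pdivlMr // mulrC.
have := ler_norm (B rho i); have := ler_norm (B (- rho) i).
have [u_ge0|u_lt0] := leP 0 (u 0 i); [rewrite (ger0_norm u_ge0) | rewrite (ltr0_norm u_lt0)].
- by have := normr_ge0 (B (- rho) i); lra.
- by have := normr_ge0 (B rho i); lra.
Qed.

Lemma compact_near_support : open Om -> Om x1 -> compact (near_support 1).
Proof.
move=> Om_open Om_x1; have [M M_bound] := near_support_bounded Om_open Om_x1.
have box : compact [set u : 'rV[R]_n | forall i, u ord0 i \in `[- M i, M i]].
  by apply: (rV_compact (A := fun i => `[- M i, M i]%classic)) => i; exact: segment_compact.
apply: subclosed_compact (closed_near_support (d := 1)) box _ => u u_supp i.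
by rewrite in_itv /= -ler_norml; exact: M_bound.
Qed.

Lemma near_support0 : open Om -> Om x1 ->
  (forall d, 0 < d -> near_support d !=set0) -> near_support 0 !=set0.
Proof.
move=> Om_open Om_x1 supp_d.
pose F := filter_from [set d : R | 0 < d] near_support.
have F_proper : ProperFilter F.
  apply: filter_from_proper; last by move=> d /supp_d.
  apply: filter_from_filter; first by exists 1 => /=.
  move=> d d' d0 d'0; exists (Num.min d d'); first by rewrite /= lt_min d0 d'0.
  by move=> u u_supp; split; apply: near_supportS u_supp; rewrite ge_min lexx ?orbT.
have F1 : F (near_support 1) by exists 1 => /=.
have [u [_ u_cluster]] := compact_near_support Om_open Om_x1 F_proper F1.
have u_supp d : 0 < d -> near_support d u.
  move=> d0; apply: closed_near_support => C C_nbhs.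
  by apply: (u_cluster (near_support d) C) => //; exists d.
exists u => z Om_z; apply/ler_addgt0Pr => d d0.
by have := u_supp d d0 z Om_z; lra.
Qed.

End ContactSupport.

Unset Implicit Arguments.

Theorem lemma3p1 (R : realType) (n : nat) (Om : set 'rV[R]_n) (L K : R)
  (v : 'rV[R]_n -> R) (a : R) (y : 'rV[R]_n) (b : R) (x0 x1 : 'rV[R]_n) (t : R) :
  bounded_strictly_convex_domain Om ->
  1 <= L ->
  {within closure Om, continuous v} ->
  visc_MLminus_le Om L K v ->
  0 < a ->
  Om x0 -> ~ contact_set Om 0 v x0 ->
  tangent_below Om (parab (- a) y b) (Gamma_env Om 0 v) x0 ->
  0 < t ->
  closure Om x1 ->
  tangent_below Om (fun x => parab (- a) y b x + t) v x1 ->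
  closure Om x1 /\ ~ contact_set Om 0 v x1.
Proof.
move=> [_ Om_open _ [M Om_le] _] L1 _ visc a0 Om_x0 _ [_ P_x0] t0 Om1_x1 [Pt_le_v Pt_x1].
split => // -[Om_x1 contact].
have [b0 le_P] := parab_bounded_below y b Om_le (ltW a0).
have v_ge z : closure Om z -> b0 <= v z.
  by move=> Om_z; apply: le_trans (le_P z Om_z) _; have := Pt_le_v z Om_z; lra.
have [y1 y1_supp] := near_support0 Om_open Om_x1 (near_support_contact v_ge Om1_x1 contact).
pose g := y - a *: x1.
have PtE z : parab (- a) y b z + t = v x1 + dotv g (z - x1) - a / 2 * sqnorm (z - x1).
  by rewrite (parab_recenter _ _ _ x1) -Pt_x1; lra.
have half_a_sq z : 0 <= a / 2 * sqnorm (z - x1) by rewrite mulr_ge0 ?divr_ge0 ?sqnorm_ge0 // ltW.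
have [y1_g | y1_g] := eqVneq y1 g.
  have : dotv g x0 + (v x1 - dotv g x1) <= Gamma_env Om 0 v x0.
    apply: Gamma_env0_ge_affine (subset_closure Om_x0) _ => z /y1_supp.
    by rewrite -y1_g dotvBr; lra.
  by rewrite -P_x0; have := PtE x0; have := half_a_sq x0; rewrite dotvBr; lra.
apply: (visc_no_kink_below (m := 2^-1 *: (y1 + g)) (w := 2^-1 *: (y1 - g)) visc _ a0 Om_x1).
- exact: le_trans ler01 L1.
- by rewrite scaler_eq0 invr_eq0 pnatr_eq0 subr_eq0 y1_g.
move=> z Om_z; have := Pt_le_v z Om_z; have := y1_supp z Om_z.
by rewrite PtE subr0; exact: kink_le_max.
Qed.
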